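(* Let $f:\mathbb{R}^n\to(-\infty,+\infty]$ be proper, lower semicontinuous and prox-bounded with threshold $\lambda_f>0$, and let $0<\lambda<\lambda_f$. Then the following are equivalent: (a) $P_\lambda f$ is firmly nonexpansive on $\mathbb{R}^n$; (b) $\partial_p^\lambda f$ is monotone; (c) $\partial_p^\lambda f$ is maximally monotone; (d) $e_\lambda f$ is convex on $\mathbb{R}^n$; (e) $f$ is convex on $\mathbb{R}^n$.
   Context: $e_\lambda f(x):=\inf_{y}\{f(y)+\frac1{2\lambda}\|y-x\|^2\}$, $P_\lambda f(x):=\operatorname{argmin}_y\{f(y)+\frac1{2\lambda}\|y-x\|^2\}$ (set-valued; firm nonexpansiveness entails single-valuedness: $\|Tx-Ty\|^2\le\langle x-y,Tx-Ty\rangle$). Prox-bounded: $e_\lambda f(x)>-\infty$ for some $\lambda>0,x$; threshold $\lambda_f$ = supremum of such $\lambda$. $v\in\partial_p^\lambda f(x)$ iff $x\in\operatorname{dom}f$ and $f(y)\ge f(x)+\langle v,y-x\rangle-\frac1{2\lambda}\|y-x\|^2$ for all $y\in\mathbb{R}^n$. *)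

(* R : realType, points of R^n are row vectors 'rV[R]_n
   (with the product topology = Euclidean topology), extended-real values \bar R. *)
From HB Require Import structures.
From mathcomp Require Import all_boot all_order all_algebra.
From mathcomp Require Import all_classical all_reals all_analysis.
Import numFieldTopology.Exports numFieldNormedType.Exports.
Set Implicit Arguments. Unset Strict Implicit. Unset Printing Implicit Defensive.
Import Order.TTheory GRing.Theory Num.Theory.
Local Open Scope classical_set_scope.
Local Open Scope ring_scope.

Section Defs.
Variables (R : realType) (n : nat).
Notation V := 'rV[R]_n.

Definition dotv (x y : V) : R := \sum_(i < n) x ord0 i * y ord0 i.
Definition sqnorm (x : V) : R := dotv x x.

Definition proper_fun (f : V -> \bar R) : Prop :=
  (forall x, f x != -oo%E) /\ (exists x, f x != +oo%E).

Definition lsc (f : V -> \bar R) : Prop :=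
  forall x (a : R), (a%:E < f x)%E -> \forall y \near x, (a%:E < f y)%E.

Definition moreau_env (l : R) (f : V -> \bar R) (x : V) : \bar R :=
  ereal_inf [set (f y + ((2 * l)^-1 * sqnorm (y - x))%:E)%E | y in [set: V]].

Definition prox_map (l : R) (f : V -> \bar R) (x : V) : set V :=
  [set y | forall z, (f y + ((2 * l)^-1 * sqnorm (y - x))%:E
                      <= f z + ((2 * l)^-1 * sqnorm (z - x))%:E)%E].

Definition prox_bounded (f : V -> \bar R) : Prop :=
  exists (l : R) (x : V), 0 < l /\ (-oo < moreau_env l f x)%E.

Definition prox_threshold (f : V -> \bar R) : \bar R :=
  ereal_sup [set l%:E | l in [set l : R | 0 < l /\ exists x, (-oo < moreau_env l f x)%E]].

Definition prox_subdiff (l : R) (f : V -> \bar R) (x : V) : set V :=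
  [set v | f x \is a fin_num /\
     forall y, (f x + (dotv v (y - x) - (2 * l)^-1 * sqnorm (y - x))%:E <= f y)%E].

Definition firmly_nonexpansive (T : V -> set V) : Prop :=
  forall x y u v, T x u -> T y v -> sqnorm (u - v) <= dotv (x - y) (u - v).

Definition monotone_op (T : V -> set V) : Prop :=
  forall x y u v, T x u -> T y v -> 0 <= dotv (u - v) (x - y).

Definition maximally_monotone (T : V -> set V) : Prop :=
  monotone_op T /\
  forall S : V -> set V, monotone_op S -> (forall x, T x `<=` S x) ->
    forall x, S x = T x.

Definition convex_fun (f : V -> \bar R) : Prop :=
  forall (x y : V) (t : R), 0 < t < 1 ->
    (f (t *: x + (1 - t) *: y)%R <= t%:E * f x + (1 - t)%:E * f y)%E.

End Defs.

From HB Require Import structures.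
From mathcomp Require Import all_boot all_order all_algebra.
From mathcomp Require Import all_classical all_reals all_analysis.
From mathcomp Require Import ring lra.
Import Order.TTheory GRing.Theory Num.Theory.
Import numFieldTopology.Exports numFieldNormedType.Exports.
Local Open Scope classical_set_scope.
Local Open Scope ring_scope.
Set Implicit Arguments. Unset Strict Implicit. Unset Printing Implicit Defensive.

(* A point p is in P_l f(x) exactly when (x - p)/l is a proximal
   subgradient of f at p, which turns firm nonexpansiveness of P_l f into
   monotonicity of the proximal subdifferential and back.  Below the threshold
   P_l f(x) is nonempty for every x (a lower semicontinuous function plus a
   coercive quadratic attains its minimum), which yields maximality and makes
   e_l f finite.  When the subdifferential is monotone, the residual map
   g(x) = (x - P x)/l is monotone and satisfies the upper bound
   e(y) <= e(x) + <g(x), y - x> + |y - x|^2/(2l); summing this bound along a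
   finely subdivided segment shows that g(x) is a subgradient of e = e_l f, so e
   is convex.  When e is convex, so is the proximal hull h = -e_l(-e_l f) <= f;
   h agrees with f wherever h has a subgradient, and proximal points of h for
   small parameters approach every point, so f = h by lower semicontinuity.
   Finally, proximal subgradients of a convex f are subgradients, hence the
   proximal subdifferential of a convex f is monotone. *)

Section InnerProduct.
Variables (R : realType) (n : nat).
Implicit Types x y z p : 'rV[R]_n.

Lemma dotvC x y : dotv x y = dotv y x.
Proof. by apply: eq_bigr => i _; rewrite mulrC. Qed.

Lemma dotvDl x y z : dotv (x + y) z = dotv x z + dotv y z.
Proof. by rewrite /dotv -big_split; apply: eq_bigr => i _; rewrite mxE mulrDl. Qed.

Lemma dotvZl (a : R) x y : dotv (a *: x) y = a * dotv x y.
Proof. by rewrite /dotv mulr_sumr; apply: eq_bigr => i _; rewrite mxE mulrA. Qed.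

Lemma dotvNl x y : dotv (- x) y = - dotv x y.
Proof. by rewrite -scaleN1r dotvZl mulN1r. Qed.

Lemma dotvBl x y z : dotv (x - y) z = dotv x z - dotv y z.
Proof. by rewrite dotvDl dotvNl. Qed.

Lemma dotvDr x y z : dotv z (x + y) = dotv z x + dotv z y.
Proof. by rewrite dotvC dotvDl !(dotvC z). Qed.

Lemma dotvZr (a : R) x y : dotv y (a *: x) = a * dotv y x.
Proof. by rewrite dotvC dotvZl dotvC. Qed.

Lemma dotvNr x y : dotv y (- x) = - dotv y x.
Proof. by rewrite dotvC dotvNl dotvC. Qed.

Lemma dotv0l x : dotv 0 x = 0.
Proof. by rewrite -(scale0r 0) dotvZl mul0r. Qed.

Lemma dotv0r x : dotv x 0 = 0.
Proof. by rewrite dotvC dotv0l. Qed.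

Lemma sqnorm0 : sqnorm (0 : 'rV[R]_n) = 0.
Proof. exact: dotv0l. Qed.

Lemma sqnorm_ge0 x : 0 <= sqnorm x.
Proof. by apply: sumr_ge0 => i _; rewrite -expr2 sqr_ge0. Qed.

Lemma sqr_coord_le_sqnorm x i : x ord0 i ^+ 2 <= sqnorm x.
Proof.
rewrite /sqnorm /dotv (bigD1 i) //= -expr2 lerDl.
by apply: sumr_ge0 => j _; rewrite -expr2 sqr_ge0.
Qed.

Lemma sqnorm_eq0 x : (sqnorm x == 0) = (x == 0).
Proof.
apply/idP/eqP => [|->]; last by rewrite sqnorm0.
rewrite psumr_eq0 => [/allP x0|i _]; last by rewrite -expr2 sqr_ge0.
apply/rowP => i; rewrite mxE.
by have := x0 i (mem_index_enum i); rewrite /= mulf_eq0 orbb => /eqP.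
Qed.

Lemma sqnormD x y : sqnorm (x + y) = sqnorm x + 2 * dotv x y + sqnorm y.
Proof. by rewrite /sqnorm dotvDl !dotvDr (dotvC y x); ring. Qed.

Lemma sqnormN x : sqnorm (- x) = sqnorm x.
Proof. by rewrite /sqnorm dotvNl dotvNr opprK. Qed.

Lemma sqnormB x y : sqnorm (x - y) = sqnorm x - 2 * dotv x y + sqnorm y.
Proof. by rewrite sqnormD dotvNr sqnormN; ring. Qed.

Lemma sqnormZ (a : R) x : sqnorm (a *: x) = a ^+ 2 * sqnorm x.
Proof. by rewrite /sqnorm dotvZl dotvZr; ring. Qed.

Lemma sqnormD_le (e : R) x y : 0 < e ->
  sqnorm (x + y) <= (1 + e) * sqnorm x + (1 + e^-1) * sqnorm y.
Proof.
move=> e0; have := sqnorm_ge0 (e *: x - y).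
rewrite sqnormB sqnormZ dotvZl => ineq.
have -> : (1 + e) * sqnorm x + (1 + e^-1) * sqnorm y =
  sqnorm x + 2 * dotv x y + sqnorm y +
  e^-1 * (e ^+ 2 * sqnorm x - 2 * (e * dotv x y) + sqnorm y).
  by field; rewrite gt_eqF.
by rewrite sqnormD lerDl mulr_ge0 // invr_ge0 ltW.
Qed.

Lemma three_point_identity (l : R) x y p : l != 0 ->
  (2 * l)^-1 * sqnorm (y - x) - (2 * l)^-1 * sqnorm (p - x) =
  (2 * l)^-1 * sqnorm (y - p) - dotv (l^-1 *: (x - p)) (y - p).
Proof.
move=> l0.
have -> : y - x = (y - p) + (p - x) by rewrite addrA subrK.
have -> : x - p = - (p - x) by rewrite opprB.
by rewrite sqnormD dotvZl dotvNl (dotvC (p - x)); field.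
Qed.

Lemma sqnorm_continuous x : continuous (fun y : 'rV[R]_n => sqnorm (y - x)).
Proof.
apply: continuous_big; first exact: add_continuous.
move=> i _ z; have coord_cont : {for z, continuous (fun y : 'rV[R]_n => (y - x) ord0 i)}.
  rewrite (_ : (fun y => _) = fun y => y ord0 i - x ord0 i); last first.
    by apply/funext => y; rewrite !mxE.
  by apply: continuousB; [exact: coord_continuous | exact: cst_continuous].
exact: continuousM.
Qed.

End InnerProduct.

Lemma le_of_le_add_natinv (R : realType) (A B K : R) :
  (forall N : nat, (1 < N)%N -> A <= B + K / N%:R) -> A <= B.
Proof.
move=> H; apply/ler_addgt0Pr => e e0.
have Ke_ge0 : 0 <= e^-1 * `|K| by rewrite mulr_ge0 // invr_ge0 ltW.
pose N := (Num.bound (e^-1 * `|K|)).+2.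
apply: le_trans (H N isT) _; rewrite lerD2l ler_pdivrMr ?ltr0n //.
apply: le_trans (ler_norm K) _; rewrite -ler_pdivrMl //.
apply/ltW/(lt_le_trans (archi_boundP Ke_ge0)).
by rewrite ler_nat; apply/leqW/leqnSn.
Qed.

Section ProximalSubdifferential.
Variables (R : realType) (n : nat).
Implicit Types x y z p v : 'rV[R]_n.
Variable g : 'rV[R]_n -> \bar R.
Hypothesis g_neq_ninfty : forall z, g z != -oo%E.
Variable z0 : 'rV[R]_n.
Hypothesis g_z0 : g z0 != +oo%E.

Lemma prox_map_fin_num l x p : prox_map l g x p -> g p \is a fin_num.
Proof.
move=> /(_ z0); rewrite fin_numE g_neq_ninfty /=.
have := g_neq_ninfty z0; move: g_z0.
by case: (g z0) => // r _ _; case: (g p).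
Qed.

Lemma prox_map_subdiff l x p : 0 < l -> prox_map l g x p ->
  prox_subdiff l g p (l^-1 *: (x - p)).
Proof.
move=> l0 Hp; have gp_fin := prox_map_fin_num Hp; split => // y.
have := Hp y; have := g_neq_ninfty y.
move: gp_fin; case: (g p) => // a _; case: (g y) => // [b _|_ _]; last by rewrite leey.
rewrite -!EFinD !lee_fin.
have := three_point_identity x y p (lt0r_neq0 l0); lra.
Qed.

Lemma prox_subdiff_map l p v : 0 < l -> prox_subdiff l g p v ->
  prox_map l g (p + l *: v) p.
Proof.
move=> l0 [gp_fin Hv] y.
have := Hv y; have := g_neq_ninfty y.
move: gp_fin; case: (g p) => // a _; case: (g y) => // [b _|_ _]; last by rewrite leey.
rewrite -!EFinD !lee_fin.
have := three_point_identity (p + l *: v) y p (lt0r_neq0 l0).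
rewrite (addrC p) addrK scalerA mulVf ?lt0r_neq0 // scale1r; lra.
Qed.

Lemma monotone_of_firmly_nonexpansive l : 0 < l ->
  firmly_nonexpansive (prox_map l g) -> monotone_op (prox_subdiff l g).
Proof.
move=> l0 fne x y u v xu yv.
have := fne _ _ _ _ (prox_subdiff_map l0 xu) (prox_subdiff_map l0 yv).
have -> : x + l *: u - (y + l *: v) = (x - y) + l *: (u - v).
  by apply/rowP => i; rewrite !mxE; ring.
by rewrite dotvDl dotvZl lerDl pmulr_rge0.
Qed.

Lemma firmly_nonexpansive_of_monotone l : 0 < l ->
  monotone_op (prox_subdiff l g) -> firmly_nonexpansive (prox_map l g).
Proof.
move=> l0 mono x y u v xu yv.
have := mono _ _ _ _ (prox_map_subdiff l0 xu) (prox_map_subdiff l0 yv).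
rewrite -scalerBr dotvZl pmulr_rge0 ?invr_gt0 //.
have -> : x - u - (y - v) = (x - y) - (u - v) by apply/rowP => i; rewrite !mxE; ring.
by rewrite dotvBl subr_ge0.
Qed.

Lemma prox_map_sqnorm_le mu l' c x p : prox_map mu g x p ->
  (forall y, ((c - (2 * l')^-1 * sqnorm (y - x))%:E <= g y)%E) ->
  ((((2 * mu)^-1 - (2 * l')^-1) * sqnorm (p - x) + c)%:E <= g x)%E.
Proof.
move=> Hp g_ge; have := Hp x; have := g_ge p.
rewrite subrr sqnorm0 mulr0 adde0.
have := g_neq_ninfty x; have := g_neq_ninfty p.
case: (g p) => [a| |] // _; case: (g x) => [b| |] // _; rewrite ?leey //.
by rewrite -EFinD !lee_fin; lra.
Qed.

End ProximalSubdifferential.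

Section ConvexProximalSubdifferential.
Variables (R : realType) (n : nat).
Implicit Types x y z v : 'rV[R]_n.
Variable g : 'rV[R]_n -> \bar R.
Hypothesis g_neq_ninfty : forall z, g z != -oo%E.
Hypothesis g_convex : convex_fun g.

Lemma subgrad_of_convex_prox_subdiff mu y v : 0 < mu -> prox_subdiff mu g y v ->
  forall z, (g y + (dotv v (z - y))%:E <= g z)%E.
Proof.
move=> mu0 [gy_fin Hv] z.
move: gy_fin; case Ey: (g y) => [a| |] // _.
have := g_neq_ninfty z; case Ez: (g z) => [b| |] // _; last by rewrite leey.
rewrite -EFinD lee_fin.
apply: (le_of_le_add_natinv (K := (2 * mu)^-1 * sqnorm (z - y))) => N N1.
set t : R := N%:R^-1.
have N0 : 0 < N%:R :> R by rewrite ltr0n ltnW.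
have t01 : 0 < t < 1 by rewrite invr_gt0 N0 invf_lt1 // ltr1n.
have := Hv (t *: z + (1 - t) *: y); have := g_convex z y t01.
have -> : t *: z + (1 - t) *: y - y = t *: (z - y) by apply/rowP => i; rewrite !mxE; ring.
rewrite Ey Ez sqnormZ dotvZr.
have := g_neq_ninfty (t *: z + (1 - t) *: y).
case: (g _) => [d| |] //= _; rewrite -?EFinM -?EFinD ?lee_fin => conv sub.
have : t * (dotv v (z - y) - t * ((2 * mu)^-1 * sqnorm (z - y))) <= t * (b - a) by lra.
rewrite ler_pM2l; last by case/andP: t01.
by rewrite mulrC -/t; lra.
Qed.

Lemma prox_subdiff_monotone_of_convex mu : 0 < mu -> monotone_op (prox_subdiff mu g).
Proof.
move=> mu0 x y u v xu yv.
have := subgrad_of_convex_prox_subdiff mu0 xu y.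
have := subgrad_of_convex_prox_subdiff mu0 yv x.
case: xu => + _; case: yv => + _.
case: (g x) => // a; case: (g y) => // b _ _.
rewrite -!EFinD !lee_fin.
have -> : y - x = - (x - y) by rewrite opprB.
by rewrite dotvNr dotvBl; lra.
Qed.

End ConvexProximalSubdifferential.

Lemma lte_EFin_between (R : realType) (u v : \bar R) : (u < v)%E ->
  exists r : R, (u < r%:E)%E /\ (r%:E < v)%E.
Proof.
case: u => [x| |]; case: v => [y| |] //=; rewrite ?lte_fin => uv.
- by exists ((x + y) / 2); rewrite !lte_fin; split; lra.
- by exists (x + 1); rewrite lte_fin ltey; split => //; lra.
- by exists (y - 1); rewrite lte_fin ltNye; split => //; lra.
- by exists 0; rewrite ltey ltNye.
Qed.

(* If the infimum [m] of [phi] on [K] were not attained, the sets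
   [{y in K | phi y < a}] with [m < a] would form a proper filter base on [K];
   lower semicontinuity at a cluster point [p] of it contradicts [m < phi p]. *)
Lemma lsc_compact_min (R : realType) (T : topologicalType) (phi : T -> \bar R)
    (K : set T) y0 :
  compact K -> K y0 ->
  (forall x (a : R), (a%:E < phi x)%E -> \forall y \near x, (a%:E < phi y)%E) ->
  exists2 p, K p & forall y, K y -> (phi p <= phi y)%E.
Proof.
move=> K_compact Ky0 phi_lsc.
pose m := ereal_inf (phi @` K).
have [[p Kp pm]|no_min] := pselect (exists2 p, K p & (phi p <= m)%E).
  by exists p => // y Ky; apply: le_trans pm _; apply: ereal_inf_lbound; exists y.
have m_lt y : K y -> (m < phi y)%E.
  move=> Ky; rewrite lt_neqAle ereal_inf_lbound ?andbT; last by exists y.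
  by apply/negP => /eqP my; apply: no_min; exists y; rewrite // my.
pose B a := [set y | K y /\ (phi y < a%:E)%E].
pose D := [set a : R | (m < a%:E)%E].
have [a0 [ma0 _]] := lte_EFin_between (m_lt _ Ky0).
have B_filter : ProperFilter (filter_from D B).
  apply: filter_from_proper; last first.
    by move=> a /ereal_inf_lt [_ [y Ky <-] ya]; exists y.
  apply: filter_from_filter; first by exists a0.
  move=> a b Da Db; exists (Num.min a b); first by rewrite /D /= EFin_min lt_min Da.
  by move=> y [Ky]; rewrite EFin_min lt_min => /andP[ya yb].
have [p [Kp p_cluster]] : K `&` cluster (filter_from D B) !=set0.
  by apply: K_compact; exists a0 => // y [].
have [a [ma ap]] := lte_EFin_between (m_lt _ Kp).
have [y [[_ ya] ay]] : B a `&` [set y | (a%:E < phi y)%E] !=set0.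
  by apply: p_cluster; [exists a | exact: phi_lsc].
by move: (lt_trans ay ya); rewrite ltxx.
Qed.

Section ProxExistence.
Variables (R : realType) (n : nat).
Implicit Types x y : 'rV[R]_n.

Lemma lsc_addr_continuous (g : 'rV[R]_n -> \bar R) (h : 'rV[R]_n -> R) :
  lsc g -> continuous h -> lsc (fun y => (g y + (h y)%:E)%E).
Proof.
move=> g_lsc h_cont x a gha.
have [r [ar rg]] : exists r : R, ((a - h x)%:E < r%:E)%E /\ (r%:E < g x)%E.
  apply: lte_EFin_between; move: gha; case: (g x) => // [s|] gha; last by rewrite ltey.
  by move: gha; rewrite -EFinD !lte_fin; lra.
rewrite lte_fin in ar.
have h_near := @cvgr_gt _ _ _ _ h (h x) (h_cont x) (a - r) (ltac:(lra)).
near=> y.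
have ry : (r%:E < g y)%E by near: y; exact: g_lsc.
have ary : a - r < h y by near: y; exact: h_near.
move: ry; case: (g y) => // [s|] ry; last by rewrite /= ltey.
by rewrite -EFinD lte_fin; rewrite lte_fin in ry; lra.
Unshelve. all: end_near.
Qed.

Lemma lsc_bounded_sublevel_min (phi : 'rV[R]_n -> \bar R) x y0 (M r : R) :
  lsc phi -> (phi y0 <= M%:E)%E ->
  (forall y, (phi y <= M%:E)%E -> sqnorm (y - x) <= r) ->
  exists p, forall y, (phi p <= phi y)%E.
Proof.
move=> phi_lsc y0M sublevel_bounded.
pose s := Num.sqrt r.
pose K := [set y : 'rV[R]_n | forall i, `[x ord0 i - s, x ord0 i + s]%classic (y ord0 i)].
have K_compact : compact K.
  by apply: (@rV_compact _ _ (fun i => `[x ord0 i - s, x ord0 i + s]%classic)) => i;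
    exact: segment_compact.
have sublevel_K y : (phi y <= M%:E)%E -> K y.
  move=> /sublevel_bounded yr i /=; rewrite in_itv /= -ler_distl -sqrtr_sqr.
  have := sqr_coord_le_sqnorm (y - x) i; rewrite !mxE => coord_le.
  exact/ler_wsqrtr/(le_trans coord_le).
have [p Kp p_min] := lsc_compact_min K_compact (sublevel_K _ y0M) phi_lsc.
exists p => y; have [/sublevel_K|] := boolP (phi y <= M%:E)%E; first exact: p_min.
rewrite -ltNge => /ltW; apply: le_trans.
exact: le_trans (p_min _ (sublevel_K _ y0M)) y0M.
Qed.

Lemma prox_map_nonempty (g : 'rV[R]_n -> \bar R) x0 (c l' mu : R) z0 :
  lsc g -> g z0 != +oo%E ->
  (forall y, ((c - (2 * l')^-1 * sqnorm (y - x0))%:E <= g y)%E) ->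
  0 < mu -> mu < l' -> forall x, exists p, prox_map mu g x p.
Proof.
move=> g_lsc gz0 g_ge mu0 mul x.
set al := (2 * mu)^-1; set be := (2 * l')^-1.
have l'0 : 0 < l' := lt_trans mu0 mul.
have be0 : 0 < be by rewrite invr_gt0 mulr_gt0.
have beal : be < al by rewrite ltf_pV2 ?posrE ?mulr_gt0 // ltr_pM2l.
pose phi y := (g y + (al * sqnorm (y - x))%:E)%E.
have phi_lsc : lsc phi.
  apply: lsc_addr_continuous => // y.
  exact: continuousM (@cst_continuous _ _ al y) (@sqnorm_continuous _ _ x y).
have [b gz0E] : exists b, g z0 = b%:E.
  by move: (g_ge z0) gz0; case: (g z0) => [b| |] // _ _; exists b.
pose M := b + al * sqnorm (z0 - x).
have phi_z0 : (phi z0 <= M%:E)%E by rewrite /phi gz0E.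
(* [e] makes [be * (1 + e) = (al + be) / 2], halfway between [be] and [al]. *)
pose e := (al - be) / (2 * be).
have e0 : 0 < e by rewrite divr_gt0 ?subr_gt0 ?mulr_gt0.
pose W := M - c + be * (1 + e^-1) * sqnorm (x - x0).
have sublevel_bounded y : (phi y <= M%:E)%E -> sqnorm (y - x) <= ((al - be) / 2)^-1 * W.
  rewrite /phi; have := g_ge y; case: (g y) => [a| |] //= a_ge.
  rewrite -EFinD !lee_fin -/be in a_ge * => aM.
  have yx0 : y - x0 = (y - x) + (x - x0) by rewrite addrA subrK.
  have := sqnormD_le (y - x) (x - x0) e0; rewrite -yx0 => /(ler_wpM2l (ltW be0)).
  have -> : be * ((1 + e) * sqnorm (y - x) + (1 + e^-1) * sqnorm (x - x0)) =
    (al + be) / 2 * sqnorm (y - x) + be * (1 + e^-1) * sqnorm (x - x0).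
    by rewrite /e; field; rewrite subr_eq0 !gt_eqF.
  move=> young; rewrite ler_pdivlMl ?divr_gt0 ?subr_gt0 //.
  by rewrite /W; lra.
have [p p_min] := lsc_bounded_sublevel_min phi_lsc phi_z0 sublevel_bounded.
by exists p.
Qed.

End ProxExistence.

Section MonotoneGradient.
Variables (R : realType) (n : nat).
Implicit Types x y h : 'rV[R]_n.
Variables (E : 'rV[R]_n -> R) (G : 'rV[R]_n -> 'rV[R]_n).

Lemma convex_of_subgrad : (forall x y, E x + dotv (G x) (y - x) <= E y) ->
  forall x y (t : R), 0 < t < 1 -> E (t *: x + (1 - t) *: y) <= t * E x + (1 - t) * E y.
Proof.
move=> subgrad x y t /andP[t0 t1].
set m := t *: x + (1 - t) *: y.
have := ler_wpM2l (ltW t0) (subgrad m x).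
have t1' : 0 <= 1 - t by rewrite subr_ge0 ltW.
have := ler_wpM2l t1' (subgrad m y).
have : t * dotv (G m) (x - m) + (1 - t) * dotv (G m) (y - m) = 0.
  rewrite -!dotvZr -dotvDr (_ : _ + _ = 0) ?dotv0r //.
  by apply/rowP => i; rewrite /m !mxE; ring.
lra.
Qed.

Variable c : R.
Hypothesis E_le_quadratic :
  forall x y, E y <= E x + dotv (G x) (y - x) + c * sqnorm (y - x).
Hypothesis G_monotone : forall x y, 0 <= dotv (G x - G y) (x - y).

Lemma le_telescope x h (k : nat) :
  E x + k%:R * dotv (G x) h - k%:R * (c * sqnorm h) <= E (x + k%:R *: h).
Proof.
elim: k => [|k IH]; first by rewrite !mul0r scale0r !addr0 subr0.
set xk := x + k%:R *: h.
have -> : x + k.+1%:R *: h = xk + h by rewrite -natr1 scalerDl scale1r addrA.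
have step := E_le_quadratic (xk + h) xk.
rewrite (_ : xk - (xk + h) = - h) ?sqnormN ?dotvNr in step; last first.
  by rewrite opprD addrA subrr add0r.
have G_le : dotv (G x) h <= dotv (G (xk + h)) h.
  have := G_monotone (xk + h) x.
  rewrite (_ : xk + h - x = k.+1%:R *: h); last first.
    by rewrite -natr1; apply/rowP => i; rewrite /xk !mxE; ring.
  by rewrite dotvZr pmulr_rge0 ?ltr0Sn // dotvBl subr_ge0.
by rewrite -natr1; lra.
Qed.

Lemma subgrad_of_monotone_gradient x y : E x + dotv (G x) (y - x) <= E y.
Proof.
apply: (le_of_le_add_natinv (K := c * sqnorm (y - x))) => N N1.
have N0 : N%:R != 0 :> R by rewrite pnatr_eq0 -lt0n ltnW.
have := le_telescope x (N%:R^-1 *: (y - x)) N.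
rewrite scalerA divff // scale1r subrKC dotvZr sqnormZ.
set D := dotv _ _; set S := sqnorm _.
have -> : N%:R * (N%:R^-1 * D) = D by rewrite mulrA divff // mul1r.
have -> : N%:R * (c * (N%:R^-1 ^+ 2 * S)) = c * S / N%:R by field.
lra.
Qed.

End MonotoneGradient.

(* [fine] sends [+oo] and [-oo] to [0]; [moreau_envE] below shows that no
   information is lost once proximal points exist. *)
Definition moreau_envr (R : realType) n (l : R) (f : 'rV[R]_n -> \bar R) x :=
  fine (moreau_env l f x).

Section MoreauEnvelope.
Variables (R : realType) (n : nat).
Implicit Types x y z p q : 'rV[R]_n.
Variables (f : 'rV[R]_n -> \bar R) (l : R).

Lemma moreau_env_prox x p : prox_map l f x p ->
  moreau_env l f x = (f p + ((2 * l)^-1 * sqnorm (p - x))%:E)%E.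
Proof.
move=> Hp; apply/eqP; rewrite eq_le; apply/andP; split.
  by apply: ereal_inf_lbound; exists p.
by apply: le_ereal_inf_tmp => _ [y _ <-]; exact: Hp.
Qed.

Hypothesis f_neq_ninfty : forall z, f z != -oo%E.
Variable z0 : 'rV[R]_n.
Hypothesis f_z0 : f z0 != +oo%E.
Hypothesis l_gt0 : 0 < l.
Hypothesis prox_ex : forall x, exists p, prox_map l f x p.

Local Notation E := (moreau_envr l f).

Lemma moreau_envrE x p : prox_map l f x p ->
  E x = fine (f p) + (2 * l)^-1 * sqnorm (p - x).
Proof.
move=> Hp; rewrite /moreau_envr (moreau_env_prox Hp).
by have := prox_map_fin_num f_neq_ninfty f_z0 Hp; case: (f p).
Qed.

Lemma moreau_envE x : moreau_env l f x = (E x)%:E.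
Proof.
have [p Hp] := prox_ex x; rewrite (moreau_env_prox Hp) (moreau_envrE Hp).
by have := prox_map_fin_num f_neq_ninfty f_z0 Hp; case: (f p).
Qed.

Lemma moreau_envr_le x y : ((E x)%:E <= f y + ((2 * l)^-1 * sqnorm (y - x))%:E)%E.
Proof. by rewrite -moreau_envE; apply: ereal_inf_lbound; exists y. Qed.

Lemma moreau_envr_le_quadratic x p y : prox_map l f x p ->
  E y <= E x + dotv (l^-1 *: (x - p)) (y - x) + (2 * l)^-1 * sqnorm (y - x).
Proof.
move=> Hp; have fp_fin := prox_map_fin_num f_neq_ninfty f_z0 Hp.
have := moreau_envr_le y p; rewrite (moreau_envrE Hp) -(fineK fp_fin) -EFinD lee_fin.
have -> : p - y = (p - x) - (y - x) by rewrite opprB addrA subrK.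
have -> : x - p = - (p - x) by rewrite opprB.
rewrite sqnormB dotvZl dotvNl.
set A := sqnorm (p - x); set D := dotv (p - x) (y - x); set S := sqnorm (y - x).
have -> : (2 * l)^-1 * (A - 2 * D + S) = (2 * l)^-1 * A - l^-1 * D + (2 * l)^-1 * S.
  by field; rewrite gt_eqF.
lra.
Qed.

Lemma prox_residual_monotone x y p q : monotone_op (prox_subdiff l f) ->
  prox_map l f x p -> prox_map l f y q ->
  0 <= dotv (l^-1 *: (x - p) - l^-1 *: (y - q)) (x - y).
Proof.
move=> mono Hp Hq.
have := mono _ _ _ _ (prox_map_subdiff f_neq_ninfty f_z0 l_gt0 Hp)
  (prox_map_subdiff f_neq_ninfty f_z0 l_gt0 Hq).
set u := l^-1 *: (x - p); set v := l^-1 *: (y - q).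
have -> : x - y = (p - q) + l *: (u - v).
  by apply/rowP => i; rewrite !mxE; field; rewrite gt_eqF.
move=> pq; rewrite dotvDr dotvZr addr_ge0 //.
exact: mulr_ge0 (ltW l_gt0) (sqnorm_ge0 _).
Qed.

Lemma moreau_env_convex_of_monotone :
  monotone_op (prox_subdiff l f) -> convex_fun (moreau_env l f).
Proof.
move=> mono; have [P HP] := choice prox_ex.
have subgrad := subgrad_of_monotone_gradient (G := fun x => l^-1 *: (x - P x))
  (fun x y => moreau_envr_le_quadratic y (HP x))
  (fun x y => prox_residual_monotone mono (HP x) (HP y)).
move=> x y t t01; rewrite !moreau_envE -!EFinM -EFinD lee_fin.
exact: convex_of_subgrad subgrad x y t t01.
Qed.

Lemma maximally_monotone_of_monotone :
  monotone_op (prox_subdiff l f) -> maximally_monotone (prox_subdiff l f).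
Proof.
move=> mono; split => // S S_mono sub x; apply/seteqP; split; last exact: sub.
move=> u Su; have [y Hy] := prox_ex (x + l *: u).
have Hw := prox_map_subdiff f_neq_ninfty f_z0 l_gt0 Hy.
have := S_mono _ _ _ _ Su (sub _ _ Hw).
have -> : u - l^-1 *: (x + l *: u - y) = l^-1 *: (y - x).
  by apply/rowP => i; rewrite !mxE; field; rewrite gt_eqF.
rewrite dotvZl pmulr_rge0 ?invr_gt0 // -[x - y]opprB dotvNr oppr_ge0 => yx_le0.
have /eqP : sqnorm (y - x) = 0 by apply/eqP; rewrite eq_le yx_le0 sqnorm_ge0.
rewrite sqnorm_eq0 subr_eq0 => /eqP yx; move: Hw; rewrite yx.
by rewrite (_ : l^-1 *: (x + l *: u - x) = u) //; apply/rowP => i; rewrite !mxE; field;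
  rewrite gt_eqF.
Qed.

End MoreauEnvelope.
Lemma ball_of_sqnorm_lt (R : realType) n (x y : 'rV[R]_n) (e : R) :
  0 < e -> sqnorm (y - x) < e ^+ 2 -> ball x e y.
Proof.
move=> e0 yx; split => // i j; rewrite ord1 /ball /= -sqrtr_sqr -(gtr0_norm e0).
rewrite -sqrtr_sqr ltr_sqrt ?exprn_gt0 //; apply: le_lt_trans yx.
by have := sqr_coord_le_sqnorm (y - x) j; rewrite !mxE -sqrrN opprB.
Qed.

Lemma small_prox_parameter (R : realType) (l C e : R) : 0 < l -> 0 <= C -> 0 < e ->
  exists2 mu, 0 < mu < l &
    forall S, ((2 * mu)^-1 - (2 * l)^-1) * S <= C -> S < e ^+ 2.
Proof.
move=> l0 C0 e0.
have Ce_gt0 : 0 < (C + 1) / e ^+ 2 by rewrite divr_gt0 ?exprn_gt0 // ltr_wpDl.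
pose K := (2 * l)^-1 + (C + 1) / e ^+ 2.
have K0 : 0 < K by rewrite addr_gt0 // invr_gt0 mulr_gt0.
exists (2 * K)^-1.
  rewrite invr_gt0 mulr_gt0 //= invf_plt ?posrE ?mulr_gt0 //.
  have -> : l^-1 = 2 * (2 * l)^-1 by field; rewrite gt_eqF.
  by rewrite ltr_pM2l // ltrDl.
have -> : (2 * (2 * K)^-1)^-1 = K by rewrite invfM invrK mulrA mulVf ?mul1r.
move=> S; rewrite /K addrAC subrr add0r.
move=> CS; rewrite ltNge; apply/negP => /(ler_wpM2l (ltW Ce_gt0)).
rewrite divfK ?gt_eqF ?exprn_gt0 //; lra.
Qed.

(* The proximal hull [-e_l (-e_l f)] of [f]. *)
Definition prox_hull (R : realType) n (l : R) (f : 'rV[R]_n -> \bar R) y :=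
  ereal_sup [set (moreau_envr l f z - (2 * l)^-1 * sqnorm (y - z))%:E
            | z in [set: 'rV[R]_n]].

Section ProxHull.
Variables (R : realType) (n : nat).
Implicit Types x y z p q w : 'rV[R]_n.
Variables (f : 'rV[R]_n -> \bar R) (l : R).
Hypothesis f_neq_ninfty : forall z, f z != -oo%E.
Variable z0 : 'rV[R]_n.
Hypothesis f_z0 : f z0 != +oo%E.
Hypothesis l_gt0 : 0 < l.
Hypothesis prox_ex : forall x, exists p, prox_map l f x p.

Local Notation E := (moreau_envr l f).
Local Notation H := (prox_hull l f).

Lemma prox_hull_ge y z : ((E z - (2 * l)^-1 * sqnorm (y - z))%:E <= H y)%E.
Proof. by apply: ereal_sup_ubound; exists z. Qed.

Lemma prox_hull_le y : (H y <= f y)%E.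
Proof.
apply: ge_ereal_sup => _ [z _ <-].
have := moreau_envr_le f_neq_ninfty f_z0 prox_ex z y; have := f_neq_ninfty y.
case: (f y) => [s _| _ _|]; [|by rewrite leey|by rewrite eqxx].
by rewrite -EFinD !lee_fin; lra.
Qed.

Lemma prox_hull_neq_ninfty y : H y != -oo%E.
Proof. by have := prox_hull_ge y y; case: (H y). Qed.

Lemma prox_hull_z0 : H z0 != +oo%E.
Proof. by have := prox_hull_le z0; move: f_z0; case: (f z0) => // [s|] _; case: (H z0). Qed.

Lemma prox_hull_lsc : lsc H.
Proof.
move=> x a /ereal_sup_gt [_ [z _ <-]]; rewrite lte_fin => az.
have cont : {for x, continuous (fun y => E z - (2 * l)^-1 * sqnorm (y - z))}.
  apply: continuousB; first exact: cst_continuous.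
  exact: continuousM (@cst_continuous _ _ (2 * l)^-1 x) (@sqnorm_continuous _ _ z x).
near=> y; apply: lt_le_trans (prox_hull_ge y z); rewrite lte_fin.
by near: y; exact: cvgr_gt cont _ az.
Unshelve. all: end_near.
Qed.

Lemma prox_hull_convex : convex_fun (moreau_env l f) -> convex_fun H.
Proof.
move=> E_convex y1 y2 t t01.
set m := t *: y1 + (1 - t) *: y2.
apply: ge_ereal_sup => _ [z _ <-].
set z1 := z + (y1 - m); set z2 := z + (y2 - m).
have z12 : t *: z1 + (1 - t) *: z2 = z by apply/rowP => i; rewrite /z1 /z2 /m !mxE; ring.
have y1z1 : y1 - z1 = m - z by apply/rowP => i; rewrite /z1 !mxE; ring.
have y2z2 : y2 - z2 = m - z by apply/rowP => i; rewrite /z2 !mxE; ring.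
have := E_convex z1 z2 t t01.
rewrite z12 !(moreau_envE f_neq_ninfty f_z0 prox_ex) -!EFinM -EFinD lee_fin => Ez.
have := prox_hull_ge y1 z1; have := prox_hull_ge y2 z2.
rewrite y1z1 y2z2; set Q := (2 * l)^-1 * sqnorm (m - z) => H2 H1.
case/andP: t01 => t0 t1.
apply: (@le_trans _ _ ((t * (E z1 - Q) + (1 - t) * (E z2 - Q))%:E)).
  by rewrite lee_fin; lra.
rewrite EFinD !EFinM; apply: leeD; apply: lee_wpmul2l => //; rewrite lee_fin; lra.
Qed.

(* With [q] a proximal point of [y + l w], the quadratic minorant of [H] at
   [y + l w] and the affine minorant of [H] at [y] squeeze [q] onto [y]. *)
Lemma le_prox_hull_of_subgrad y w : H y \is a fin_num ->
  (forall q, (H y + (dotv w (q - y))%:E <= H q)%E) -> (f y <= H y)%E.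
Proof.
move=> Hy_fin subgrad.
set zq := y + l *: w; have [q Hq] := prox_ex zq.
have fq_fin := prox_map_fin_num f_neq_ninfty f_z0 Hq.
have upper := prox_hull_ge y zq.
have lower := le_trans (subgrad q) (prox_hull_le q).
rewrite (moreau_envrE f_neq_ninfty f_z0 Hq) -(fineK Hy_fin) lee_fin in upper.
rewrite -(fineK Hy_fin) -(fineK fq_fin) -EFinD lee_fin in lower.
have yzq : y - zq = - (l *: w) by apply/rowP => i; rewrite /zq !mxE; ring.
have qzq : q - zq = (q - y) - l *: w by apply/rowP => i; rewrite /zq !mxE; ring.
rewrite yzq qzq sqnormN sqnormB !sqnormZ dotvZr -addrA in upper.
rewrite dotvC in lower.
set D := dotv (q - y) w in upper lower; set S := sqnorm (q - y) in upper.
have quad_eq : (2 * l)^-1 * (S - 2 * (l * D) + l ^+ 2 * sqnorm w) -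
  (2 * l)^-1 * (l ^+ 2 * sqnorm w) = (2 * l)^-1 * S - D by field; rewrite gt_eqF.
rewrite quad_eq in upper.
have : (2 * l)^-1 * S <= 0 by lra.
rewrite pmulr_rle0 ?invr_gt0 ?mulr_gt0 // => S_le0.
have S0 : S = 0 by apply/eqP; rewrite eq_le S_le0 sqnorm_ge0.
move/eqP: (S0); rewrite sqnorm_eq0 subr_eq0 => /eqP qy.
have D0 : D = 0 by rewrite /D qy subrr dotv0l.
rewrite -{1}qy -(fineK fq_fin) -(fineK Hy_fin) lee_fin.
by rewrite S0 D0 mulr0 subr0 addr0 in upper.
Qed.

(* If [f p > H p], a proximal point [y] of [H] at [p] for a small parameter
   lies in the neighbourhood where [f > H p] by lower semicontinuity, while
   convexity of [H] gives it a subgradient at [y], so [f y <= H y <= H p]. *)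
Lemma le_prox_hull : lsc f -> convex_fun (moreau_env l f) -> forall p, (f p <= H p)%E.
Proof.
move=> f_lsc E_convex p.
have := prox_hull_neq_ninfty p; case Hp: (H p) => [r| |] // _; last by rewrite leey.
rewrite leNgt; apply/negP => r_lt_fp.
have [e e0 ball_sub] := (nbhs_ballP _ _).1 (f_lsc _ _ r_lt_fp).
have gap_ge0 : 0 <= r - E p.
  by have := prox_hull_ge p p; rewrite Hp subrr sqnorm0 mulr0 subr0 lee_fin subr_ge0.
have [mu /andP[mu0 mul] mu_small] := small_prox_parameter l_gt0 gap_ge0 e0.
have H_ge y : ((E p - (2 * l)^-1 * sqnorm (y - p))%:E <= H y)%E := prox_hull_ge y p.
have [y Hy] := prox_map_nonempty prox_hull_lsc prox_hull_z0 H_ge mu0 mul p.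
have y_near : sqnorm (y - p) < e ^+ 2.
  apply: mu_small; have := prox_map_sqnorm_le prox_hull_neq_ninfty Hy H_ge.
  by rewrite Hp lee_fin; lra.
have Hy_le_r : (H y <= r%:E)%E.
  have := Hy p; rewrite subrr sqnorm0 mulr0 adde0 Hp; apply: le_trans.
  by rewrite leeDl // lee_fin mulr_ge0 ?sqnorm_ge0 // invr_ge0 mulr_ge0 // ltW.
have Hy_fin : H y \is a fin_num.
  by move: Hy_le_r (prox_hull_neq_ninfty y); case: (H y).
have y_subgrad := subgrad_of_convex_prox_subdiff prox_hull_neq_ninfty
  (prox_hull_convex E_convex) mu0 (prox_map_subdiff prox_hull_neq_ninfty prox_hull_z0 mu0 Hy).
have fy_le := le_prox_hull_of_subgrad Hy_fin y_subgrad.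
have r_lt_fy : (r%:E < f y)%E := ball_sub _ (ball_of_sqnorm_lt e0 y_near).
by have := lt_le_trans r_lt_fy (le_trans fy_le Hy_le_r); rewrite ltxx.
Qed.

Lemma convex_of_moreau_env_convex : lsc f -> convex_fun (moreau_env l f) -> convex_fun f.
Proof.
move=> f_lsc E_convex.
have -> : f = H.
  by apply/funext => y; apply/eqP; rewrite eq_le le_prox_hull // prox_hull_le.
exact: prox_hull_convex.
Qed.

End ProxHull.

Lemma quadratic_minorant_of_lt_threshold (R : realType) n (f : 'rV[R]_n -> \bar R) (l : R) :
  (l%:E < prox_threshold f)%E ->
  exists l' c x0, l < l' /\
    forall y, ((c - (2 * l')^-1 * sqnorm (y - x0))%:E <= f y)%E.
Proof.
move=> /ereal_sup_gt [_ [l' [l'0 [x0 env_gt]] <-]]; rewrite lte_fin => ll'.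
have [c c_le] : exists c : R, (c%:E <= moreau_env l' f x0)%E.
  move: env_gt; case: (moreau_env l' f x0) => [c| |] // _; first by exists c.
  by exists 0; rewrite leey.
exists l', c, x0; split => // y.
have := le_trans c_le (ereal_inf_lbound (ex_intro2 _ _ y I erefl)).
by case: (f y) => [s| |]; rewrite ?leey // -EFinD !lee_fin; lra.
Qed.

Theorem mainTheorem3 (R : realType) (n : nat) (f : 'rV[R]_n -> \bar R) (l : R) :
  proper_fun f -> lsc f -> prox_bounded f -> (0 < prox_threshold f)%E ->
  0 < l -> (l%:E < prox_threshold f)%E ->
  [<-> firmly_nonexpansive (prox_map l f);
       monotone_op (prox_subdiff l f);
       maximally_monotone (prox_subdiff l f);
       convex_fun (moreau_env l f);
       convex_fun f].
Proof.
move=> [f_neq_ninfty [z0 f_z0]] f_lsc _ _ l_gt0 l_lt_threshold.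
have [l' [c [x0 [ll' f_ge]]]] := quadratic_minorant_of_lt_threshold l_lt_threshold.
have prox_ex := prox_map_nonempty f_lsc f_z0 f_ge l_gt0 ll'.
tfae.
- exact: monotone_of_firmly_nonexpansive.
- exact: (maximally_monotone_of_monotone f_neq_ninfty f_z0 l_gt0 prox_ex).
- by case=> mono _; exact: (moreau_env_convex_of_monotone f_neq_ninfty f_z0 l_gt0 prox_ex mono).
- exact: (convex_of_moreau_env_convex f_neq_ninfty f_z0 l_gt0 prox_ex f_lsc).
- move=> f_convex; apply: (firmly_nonexpansive_of_monotone f_neq_ninfty f_z0 l_gt0).
  exact: (prox_subdiff_monotone_of_convex f_neq_ninfty f_convex l_gt0).
Qed.
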